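(* Let $U\subset\mathbb R^n$ be a smooth bounded domain and $H:\mathbb R^n\to\mathbb R$ satisfy: $H$ smooth with $H(0)<0$; $\lim_{|p|\to\infty}H(p)/|p|=\infty$; and there exist $\gamma,\delta>0$ with $DH(p)\cdot p-\gamma H(p)\ge\delta$ for all $p\in\mathbb R^n$. Let $\epsilon>0$. If $u$ and $v$ are (classical) solutions of $H(Dw)=\epsilon\Delta w$ in $U$, $w=0$ on $\partial U$, then $u=v$. *)

From HB Require Import structures.
From mathcomp Require Import all_boot all_order all_algebra.
From mathcomp Require Import all_classical all_reals all_analysis.
Set Implicit Arguments. Unset Strict Implicit. Unset Printing Implicit Defensive.
Import Order.TTheory GRing.Theory Num.Theory.
Import numFieldNormedType.Exports.
Local Open Scope classical_set_scope.
Local Open Scope ring_scope.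

Section Defs.
Variable R : realType.

Fixpoint Ck_on {V : normedModType R} (k : nat) (A : set V) (f : V -> R) : Prop :=
  match k with
  | 0 => forall x, A x -> {for x, continuous f}
  | k'.+1 => (forall x, A x -> differentiable f x) /\
             (forall v : V, Ck_on k' A ('D_v f))
  end.

Definition smooth {V : normedModType R} (f : V -> R) : Prop :=
  forall k, Ck_on k setT f.

Definition dotv {n : nat} (p q : 'rV[R]_n) : R := \sum_(i < n) p 0 i * q 0 i.
Definition enorm {n : nat} (p : 'rV[R]_n) : R := Num.sqrt (dotv p p).

Definition evec {n : nat} (i : 'I_n) : 'rV[R]_n := delta_mx 0 i.

Definition grad {n : nat} (w : 'rV[R]_n -> R) (x : 'rV[R]_n) : 'rV[R]_n :=
  \row_(i < n) 'D_(evec i) w x.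

Definition lap {n : nat} (w : 'rV[R]_n -> R) (x : 'rV[R]_n) : R :=
  \sum_(i < n) 'D_(evec i) ('D_(evec i) w) x.

(* Smooth (C^infinity) boundary, in dimension n = 1 + m (Evans' definition):
   for every boundary point x0 there are r > 0, a rigid change of coordinates
   y = (x - x0) Q with Q orthogonal, and a smooth gamma : R^m -> R such that
   inside the Euclidean ball B(x0, r), U is the region strictly above the
   graph of gamma:  y_1 > gamma(y_2, ..., y_n). *)
Definition smooth_boundary {m : nat} (U : set 'rV[R]_(1 + m)) : Prop :=
  forall x0, closure U x0 -> ~ U x0 ->
  exists r : R, 0 < r /\
  exists Q : 'M[R]_(1 + m), Q *m Q^T = 1%:M /\
  exists gam : 'rV[R]_m -> R, smooth gam /\
  forall x : 'rV[R]_(1 + m), enorm (x - x0) < r ->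
    (U x <-> let y := (x - x0) *m Q in
             gam (@rsubmx R 1 1 m y) < y 0 0).

Definition smooth_bounded_domain {m : nat} (U : set 'rV[R]_(1 + m)) : Prop :=
  open U /\ connected U /\ (exists M : R, forall x, U x -> enorm x <= M)
  /\ smooth_boundary U.

Definition superlinear {n : nat} (H : 'rV[R]_n -> R) : Prop :=
  forall M : R, exists R0 : R, forall p, R0 < enorm p -> M < H p / enorm p.

Definition classical_solution {m : nat} (U : set 'rV[R]_(1 + m))
    (H : 'rV[R]_(1 + m) -> R) (eps : R) (w : 'rV[R]_(1 + m) -> R) : Prop :=
  Ck_on 2 U w /\
  {within closure U, continuous w} /\
  (forall x, U x -> H (grad w x) = eps * lap w x) /\
  (forall x, closure U x -> ~ U x -> w x = 0).

End Defs.

From HB Require Import structures.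
From mathcomp Require Import all_boot all_order all_algebra.
From mathcomp Require Import all_classical all_reals all_analysis.
From mathcomp Require Import ring lra.
Import Order.TTheory GRing.Theory Num.Theory.
Import numFieldNormedType.Exports.
Local Open Scope classical_set_scope.
Local Open Scope ring_scope.

(* If u - v had a positive maximum M0 on the closure of U, perturb it to
   w = u - v + eta * exp(lam * x_1) with eta so small that the maximum of w is
   still attained at a point x of U where u - v >= M0 / 2.  At x, Dw = 0 and
   the second derivatives of w along the coordinate axes are nonpositive, so
   Du = Dv - s e_1 and Delta u - Delta v <= - lam * s with
   s = eta * lam * exp(lam * x_1) in ]0, 1].  Subtracting the two equations
   and applying the mean value theorem to H along e_1,
     eps * lam * s <= eps * (Delta v - Delta u) = H(Dv) - H(Du) <= C * s,
   where C bounds d_1 H on a compact set containing all the gradients involved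
   (the derivatives of v are bounded on the compact set where u - v >= M0 / 2).
   Choosing lam > C / eps is absurd, so u <= v, and u = v by symmetry. *)

Section OneVariable.
Context {R : realType}.

Lemma is_derive_local_max_eq0 {F h : R -> R} {r : R} : 0 < r ->
  (forall t : R, `|t| < r -> is_derive t 1 F (h t)) ->
  (forall t : R, `|t| < r -> F t <= F 0) -> h 0 = 0.
Proof.
move=> r_gt0 dF Fmax.
have itvP (t : R) : (t \in `]- r, r[) = (`|t| < r) by rewrite in_itv /= ltr_norml.
have dF0 : is_derive (0 : R) 1 F 0.
  apply: (@derive1_at_max _ F (- r) r 0).
  - by rewrite ge0_cp // ltW.
  - by move=> t; rewrite itvP => /dF [].
  - by rewrite itvP normr0.
  - by move=> t; rewrite itvP => /Fmax.
have dFh0 := dF 0; rewrite normr0 in dFh0.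
by rewrite -(@derive_val _ _ _ _ _ _ _ (dFh0 r_gt0)) (@derive_val _ _ _ _ _ _ _ dF0).
Qed.

Lemma is_derive2_local_max_le0 {F h : R -> R} {d r : R} : 0 < r ->
  (forall t : R, `|t| < r -> is_derive t 1 F (h t)) ->
  (forall t : R, `|t| < r -> F t <= F 0) ->
  is_derive (0 : R) 1 h d -> d <= 0.
Proof.
move=> r_gt0 dF Fmax dh; rewrite leNgt; apply/negP => d_gt0.
have h0 : h 0 = 0 := is_derive_local_max_eq0 r_gt0 dF Fmax.
have quot_cvg : (fun s : R => s^-1 *: ((h \o shift 0) (s *: 1) - h 0)) @ 0^' --> d.
  rewrite -(@derive_val _ _ _ _ _ _ _ dh); exact: (@ex_derive _ _ _ _ _ _ _ dh).
have := cvgr_gt d quot_cvg 0 d_gt0.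
rewrite near_withinE => /(_ _) /nbhs_ballP [e /= e_gt0 quot_gt0].
pose t0 := Num.min e r / 2.
have t0_gt0 : 0 < t0 by rewrite divr_gt0 // lt_min e_gt0 r_gt0.
have t0_lt : t0 < Num.min e r.
  by rewrite /t0 ltr_pdivrMr // ltr_pMr ?ltr1n // lt_min e_gt0 r_gt0.
have t0_lt_r : t0 < r by apply: (lt_le_trans t0_lt); rewrite ge_min lexx orbT.
have h_pos (s : R) : 0 < s -> s <= t0 -> 0 < h s.
  move=> s_gt0 s_le.
  have : 0 < s^-1 *: ((h \o shift 0) (s *: 1) - h 0).
    apply: quot_gt0; last by rewrite gt_eqF.
    rewrite /ball /= sub0r normrN gtr0_norm //.
    by apply: (le_lt_trans s_le); apply: (lt_le_trans t0_lt); rewrite ge_min lexx.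
  by rewrite /= h0 subr0 /shift /= addr0 [s *: 1]mulr1 pmulr_rgt0 // invr_gt0.
have small (t : R) : t \in `[0, t0] -> `|t| < r.
  by rewrite in_itv /= => /andP[t_ge0 t_le]; rewrite ger0_norm //; exact: le_lt_trans t0_lt_r.
have [c c_in F_mvt] : exists2 c : R, c \in `]0, t0[ & F t0 - F 0 = h c * (t0 - 0).
  apply: MVT => // [t t_in|].
    by apply: dF; apply: small; exact: subset_itv_oo_cc.
  apply: derivable_within_continuous => t t_in.
  by have [] := dF t (small t t_in).
have : 0 < F t0 - F 0.
  rewrite F_mvt subr0 mulr_gt0 //.
  by move: c_in; rewrite in_itv /= => /andP[c_gt0 c_lt]; apply: h_pos => //; exact: ltW.
by rewrite subr_gt0 ltNge Fmax // gtr0_norm.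
Qed.

Lemma is_derive_expR_affine (a k t : R) :
  is_derive t 1 (fun s : R => expR (a * s + k)) (a * expR (a * t + k)).
Proof.
have dl : is_derive t 1 (fun s : R => a * s + k) a.
  have -> : (fun s : R => a * s + k) = a \*: (@id R) + cst k by apply: funext.
  have : is_derive t 1 (a \*: (@id R) + cst k) (a *: (1 : R) + 0) by apply: is_deriveD.
  by rewrite addr0 [a *: 1]mulr1.
rewrite mulrC; exact: is_derive1_comp (is_derive_expR _) dl.
Qed.

End OneVariable.

Section Lines.
Context {R : realType} {V : normedModType R}.

Lemma is_derive_along_line (f : V -> R) (e x : V) (t : R) :
  differentiable f (t *: e + x) ->
  is_derive t 1 (fun s : R => f (s *: e + x)) ('D_e f (t *: e + x)).
Proof.
move=> df.
have quotE : (fun h : R => h^-1 *: (((fun s : R => f (s *: e + x)) \o shift t) (h *: 1)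
               - f (t *: e + x))) =
             (fun h : R => h^-1 *: ((f \o shift (t *: e + x)) (h *: e) - f (t *: e + x))).
  by apply: funext => h /=; rewrite /shift /= scalerDl -addrA [h *: 1]mulr1.
apply: DeriveDef; first by rewrite /derivable quotE; exact: diff_derivable.
by rewrite /derive quotE.
Qed.

Lemma open_line_nbhs (U : set V) (x e : V) : open U -> U x ->
  exists2 r : R, 0 < r & forall t : R, `|t| < r -> U (t *: e + x).
Proof.
move=> oU Ux.
have line_cont : {for 0, continuous (fun t : R => t *: e + x)}.
  exact: (cvgD (@scalel_continuous _ _ e 0) (cvg_cst x)).
have U_nbhs : nbhs ((fun t : R => t *: e + x) 0) U by rewrite /= scale0r add0r; exact: open_nbhs_nbhs.
have /nbhs_ballP [r /= r_gt0 rU] := line_cont _ U_nbhs.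
by exists r => // t t_lt; apply: rU; rewrite /ball /= sub0r normrN.
Qed.

Lemma mean_value_along_line (f : V -> R) (p e : V) (s : R) : 0 < s ->
  (forall t : R, differentiable f (t *: e + p)) ->
  exists2 c : R, c \in `]0, s[ & f (s *: e + p) - f p = 'D_e f (c *: e + p) * s.
Proof.
move=> s_gt0 df.
have df_line (t : R) := @is_derive_along_line f e p t (df t).
have [c c_in mvt] : exists2 c : R, c \in `]0, s[ &
    f (s *: e + p) - f (0 *: e + p) = 'D_e f (c *: e + p) * (s - 0).
  apply: MVT => //.
  by apply: derivable_within_continuous => t _; have [] := df_line t.
by exists c => //; move: mvt; rewrite scale0r add0r subr0.
Qed.

Lemma line_local_max_derive (u v : V -> R) (c c1 : R -> R) (c2 r : R) (x e : V) :
  0 < r ->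
  (forall t : R, `|t| < r -> differentiable u (t *: e + x) /\ differentiable v (t *: e + x)) ->
  differentiable ('D_e u) x -> differentiable ('D_e v) x ->
  (forall t : R, `|t| < r -> is_derive t 1 c (c1 t)) -> is_derive (0 : R) 1 c1 c2 ->
  (forall t : R, `|t| < r -> u (t *: e + x) - v (t *: e + x) + c t <= u x - v x + c 0) ->
  'D_e u x - 'D_e v x + c1 0 = 0 /\ 'D_e ('D_e u) x - 'D_e ('D_e v) x + c2 <= 0.
Proof.
move=> r_gt0 duv ddu ddv dc dc1 Fmax.
pose F := (fun s : R => u (s *: e + x)) - (fun s : R => v (s *: e + x)) + c.
pose h := (fun s : R => 'D_e u (s *: e + x)) - (fun s : R => 'D_e v (s *: e + x)) + c1.
have x0 : 0 *: e + x = x by rewrite scale0r add0r.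
have dF (t : R) : `|t| < r -> is_derive t 1 F (h t).
  move=> t_lt; have [du dv] := duv t t_lt.
  apply: is_deriveD; last exact: dc.
  by apply: is_deriveB; exact: is_derive_along_line.
have F_max (t : R) : `|t| < r -> F t <= F 0.
  move=> t_lt.
  change (u (t *: e + x) - v (t *: e + x) + c t <=
          u (0 *: e + x) - v (0 *: e + x) + c 0).
  by rewrite x0; exact: Fmax.
have dh : is_derive (0 : R) 1 h ('D_e ('D_e u) x - 'D_e ('D_e v) x + c2).
  apply: is_deriveD => //; apply: is_deriveB.
    by have := @is_derive_along_line ('D_e u) e x 0; rewrite x0; apply.
  by have := @is_derive_along_line ('D_e v) e x 0; rewrite x0; apply.
split; last exact: is_derive2_local_max_le0 r_gt0 dF F_max dh.
have := is_derive_local_max_eq0 r_gt0 dF F_max.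
change ('D_e u (0 *: e + x) - 'D_e v (0 *: e + x) + c1 0 = 0 ->
        'D_e u x - 'D_e v x + c1 0 = 0).
by rewrite x0.
Qed.

End Lines.

Section RowVectors.
Context {R : realType}.

Lemma coord_le_enorm {n} (y : 'rV[R]_n) (i : 'I_n) : `|y 0 i| <= enorm y.
Proof.
rewrite -sqrtr_sqr /enorm /dotv ler_sqrt; last first.
  by apply: sumr_ge0 => j _; rewrite -expr2 sqr_ge0.
rewrite (bigD1 i) //= expr2 lerDl; apply: sumr_ge0 => j _.
by rewrite -expr2 sqr_ge0.
Qed.

Lemma evec_entry0 {n} (i : 'I_n.+1) : evec R i 0 0 = (i == 0)%:R.
Proof. by rewrite mxE eqxx eq_sym. Qed.

Lemma rV_norm_leP {n} (y : 'rV[R]_n) (b : R) : 0 <= b ->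
  `|y| <= b <-> forall i, `|y 0 i| <= b.
Proof.
rewrite -[`|y|]/(mx_norm y) mx_normrE => b_ge0; split => [yb i|yb].
  by apply: le_trans yb; exact: (le_bigmax _ _ (0, i)).
by apply: bigmax_le => // -[i j] _; rewrite [i]ord1; exact: yb.
Qed.

Lemma coord_le_norm {n} (y : 'rV[R]_n) (i : 'I_n) : `|y 0 i| <= `|y|.
Proof. exact: (@rV_norm_leP n y _ (normr_ge0 y)).1 (lexx _) i. Qed.

Lemma norm_le_enorm {n} (y : 'rV[R]_n) : `|y| <= enorm y.
Proof. by apply/rV_norm_leP; [exact: sqrtr_ge0 | exact: coord_le_enorm]. Qed.

Lemma compact_norm_le n (b : R) : compact [set p : 'rV[R]_n | `|p| <= b].
Proof.
apply: bounded_closed_compact.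
  by exists b; split => [|M bM p /= pb]; [exact: num_real | exact: le_trans pb (ltW bM)].
rewrite -[X in closed X]/(Num.norm @^-1` [set x : R | x <= b]).
apply: preimage_closed; last exact: closed_le.
by move=> p _; exact: norm_continuous.
Qed.

Lemma closure_norm_le {n} {U : set 'rV[R]_n} {b : R} :
  (forall x, U x -> `|x| <= b) -> closure U `<=` [set x | `|x| <= b].
Proof.
move=> Ub; rewrite [X in _ `<=` X](closure_id _).1; first exact: closureS.
by apply: compact_closed; [exact: norm_hausdorff | exact: compact_norm_le].
Qed.

Lemma bounded_closure_compact {n} {U : set 'rV[R]_n} {b : R} :
  (forall x, U x -> `|x| <= b) -> compact (closure U).
Proof.
move=> Ub; apply: subclosed_compact (@closed_closure _ U) (compact_norm_le _ b) _.
exact: closure_norm_le.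
Qed.

End RowVectors.

Section CompactBounds.
Context {R : realType}.

Lemma compact_continuous_bounded {T : topologicalType} {W : normedModType R}
    {K : set T} {f : T -> W} :
  compact K -> {within K, continuous f} -> exists B : R, forall y, K y -> `|f y| <= B.
Proof.
move=> cK cf; have [M [_ fKM]] := compact_bounded (continuous_compact cf cK).
by exists (M + 1) => y Ky; apply: (fKM (M + 1)); [rewrite ltrDl | exists y].
Qed.

Lemma compact_continuous_family_bounded (T : topologicalType) (I : finType)
    (K : set T) (f : I -> T -> R) :
  compact K -> (forall i, {within K, continuous (f i)}) ->
  exists B : R, forall i y, K y -> `|f i y| <= B.
Proof.
move=> cK cf; have [Bf fB] := choice (fun i => compact_continuous_bounded cK (cf i)).
exists (\sum_i `|Bf i|) => i y Ky; apply: le_trans (fB i y Ky) _.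
apply: le_trans (ler_norm _) _.
by rewrite (bigD1 i) //= lerDl; apply: sumr_ge0.
Qed.

End CompactBounds.

Lemma small_weight_exists {R : realType} {a E l : R} : 0 < a -> 0 < E -> 0 < l ->
  exists2 eta : R, 0 < eta & eta * E < a /\ eta * l * E <= 1.
Proof.
move=> a_gt0 E_gt0 l_gt0; set W := l + a^-1.
have W_gt0 : 0 < W by rewrite addr_gt0 ?invr_gt0.
have etaE : (E * W)^-1 * E = W^-1 by rewrite invfM mulrAC mulVf ?gt_eqF // mul1r.
exists (E * W)^-1; first by rewrite invr_gt0 mulr_gt0.
rewrite mulrAC etaE; split.
  by rewrite -[a]invrK ltf_pV2 ?posrE ?invr_gt0 // ltrDr.
by rewrite mulrC ler_pdivrMr // mul1r lerDl invr_ge0 ltW.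
Qed.

Section Comparison.
Context {R : realType} {m : nat}.
Local Notation vec := 'rV[R]_(1 + m).
Context {U : set vec} {H : vec -> R} {eps : R} {u v : vec -> R}.
Hypotheses (openU : open U) (H_C1 : Ck_on 1 setT H) (eps_gt0 : 0 < eps).
Hypotheses (u_sol : classical_solution U H eps u) (v_sol : classical_solution U H eps v).

Lemma perturbed_max_derivatives (lam eta : R) (x : vec) : U x -> 0 < eta ->
  (forall y, U y -> u y - v y + eta * expR (lam * y 0 0) <=
                    u x - v x + eta * expR (lam * x 0 0)) ->
  grad u x = grad v x - (eta * lam * expR (lam * x 0 0)) *: evec R 0 /\
  lap u x - lap v x <= - (lam * (eta * lam * expR (lam * x 0 0))).
Proof.
have [[du ddu] _] := u_sol; have [[dv ddv] _] := v_sol.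
move=> Ux eta_gt0 fmax; set phi := expR (lam * x 0 0).
have line_max (i : 'I_(1 + m)) :
  'D_(evec R i) u x - 'D_(evec R i) v x + (lam * evec R i 0 0) * (eta * phi) = 0 /\
  'D_(evec R i) ('D_(evec R i) u) x - 'D_(evec R i) ('D_(evec R i) v) x
     + (lam * evec R i 0 0) * ((lam * evec R i 0 0) * (eta * phi)) <= 0.
  set a := lam * evec R i 0 0.
  have [r r_gt0 rU] := @open_line_nbhs _ _ U x (evec R i) openU Ux.
  pose c := eta \*: (fun t : R => expR (a * t + lam * x 0 0)).
  have c0 : c 0 = eta * phi by rewrite /c /= mulr0 add0r.
  have dc (t : R) : is_derive t 1 c ((a \*: c) t).
    have := @is_deriveZ _ _ _ _ eta _ _ _ (is_derive_expR_affine a (lam * x 0 0) t).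
    suff -> : (a \*: c) t = eta *: (a * expR (a * t + lam * x 0 0)) by [].
    by rewrite /= /c /= /GRing.scale /=; ring.
  (* the two derivative premises are found from [dc] by instance resolution *)
  rewrite -c0; apply: (@line_local_max_derive _ _ u v c (a \*: c) (a *: (a * c 0)) r).
  - exact: r_gt0.
  - by move=> t /rU Ut; split; [apply: du | apply: dv].
  - exact: (ddu (evec R i)).1 x Ux.
  - exact: (ddv (evec R i)).1 x Ux.
  - move=> t /rU Ut; have := fmax _ Ut.
    have -> : lam * (t *: evec R i + x) 0 0 = a * t + lam * x 0 0 by rewrite /a !mxE; ring.
    by rewrite /c /= mulr0 add0r; apply.
split.
  apply/rowP => j; rewrite !mxE.
  have := (line_max j).1; rewrite evec_entry0.
  by case: (j == 0) => /=; rewrite ?mulr1 ?mulr0 ?mul0r; lra.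
rewrite /lap -sumrB (bigD1 0) //= -[X in _ <= X]addr0 lerD //.
  rewrite -subr_le0 opprK [eta * lam]mulrC -mulrA.
  by have := (line_max 0).2; rewrite evec_entry0 eqxx mulr1.
apply: sumr_le0 => j j_neq0; have := (line_max j).2.
by rewrite evec_entry0 (negbTE j_neq0) mulr0 mul0r addr0.
Qed.

Lemma perturbed_max_bound (lam eta B C : R) (x : vec) : U x -> 0 < eta -> 0 < lam ->
  eta * lam * expR (lam * x 0 0) <= 1 ->
  (forall y, U y -> u y - v y + eta * expR (lam * y 0 0) <=
                    u x - v x + eta * expR (lam * x 0 0)) ->
  (forall i, `|'D_(evec R i) v x| <= B) ->
  (forall p, `|p| <= B + 1 -> `|'D_(evec R 0) H p| <= C) ->
  eps * lam <= C.
Proof.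
have [_ [_ [u_eq _]]] := u_sol; have [_ [_ [v_eq _]]] := v_sol.
move=> Ux eta_gt0 lam_gt0 s_le1 fmax dvB dHC.
have [grad_eq lap_le] := perturbed_max_derivatives _ _ _ Ux eta_gt0 fmax.
set s := eta * lam * expR (lam * x 0 0) in s_le1 grad_eq lap_le.
have s_gt0 : 0 < s by rewrite !mulr_gt0 ?expR_gt0.
have [c c_in mvt] := @mean_value_along_line _ _ H (grad u x) (evec R 0) s s_gt0
  (fun t => H_C1.1 _ I).
have Dv_eq : s *: evec R 0 + grad u x = grad v x by rewrite grad_eq addrC subrK.
rewrite Dv_eq v_eq // u_eq // in mvt.
have B_ge0 : 0 <= B := le_trans (normr_ge0 _) (dvB 0).
have Dv_le : `|grad v x| <= B by apply/rV_norm_leP => // i; rewrite mxE.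
have evec_le1 : `|evec R (0 : 'I_(1 + m))| <= 1.
  by apply/rV_norm_leP => // i; rewrite mxE; case: (_ && _); rewrite ?normr1 ?normr0.
have xi_le : `|c *: evec R 0 + grad u x| <= B + 1.
  rewrite grad_eq addrCA -scalerBl (le_trans (ler_normD _ _)) // lerD //.
  move: c_in; rewrite in_itv /= => /andP[c_gt0 c_lt].
  rewrite normrZ -[1]mul1r ler_pM // ler0_norm ?subr_le0 ?ltW // opprB ltrBlDr.
  by apply: le_lt_trans s_le1 _; rewrite ltrDl.
have dH_le := le_trans (ler_norm _) (dHC _ xi_le).
have eps_lap : eps * (lam * s) <= eps * lap v x - eps * lap u x.
  by rewrite -mulrBr ler_pM2l // -opprB lerNr.
have dH_s : 'D_(evec R 0) H (c *: evec R 0 + grad u x) * s <= C * s by rewrite ler_pM2r.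
rewrite -(ler_pM2r s_gt0) -mulrA; apply: le_trans eps_lap _.
by rewrite mvt.
Qed.

Lemma superlevel_sub (c : R) : 0 < c ->
  [set y | closure U y /\ c <= u y - v y] `<=` U.
Proof.
have [_ [_ [_ u0]]] := u_sol; have [_ [_ [_ v0]]] := v_sol.
move=> c_gt0 y [cly c_le]; apply: contrapT => nUy.
by move: c_le; rewrite u0 // v0 // subrr leNgt c_gt0.
Qed.

Lemma superlevel_compact (c : R) : compact (closure U) ->
  compact [set y | closure U y /\ c <= u y - v y].
Proof.
have [_ [u_cont _]] := u_sol; have [_ [v_cont _]] := v_sol.
move=> cU; apply: (subclosed_compact _ cU) => [|y []//].
have -> : [set y | closure U y /\ c <= u y - v y] =
          (u - v) @^-1` `[c, +oo[ `&` closure U.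
  apply/seteqP; split => y /=; first by move=> [cly c_le]; rewrite in_itv /= c_le.
  by rewrite in_itv /= andbT => -[c_le cly].
rewrite closed_setIS; last exact: closed_closure.
apply: preimage_closed; last exact: rray_closed.
by move=> y _; exact: within_continuousB.
Qed.

Lemma perturbed_continuous (lam eta : R) :
  {within closure U, continuous (fun y => u y - v y + eta * expR (lam * y 0 0))}.
Proof.
have [_ [u_cont _]] := u_sol; have [_ [v_cont _]] := v_sol.
apply: within_continuousD; first exact: within_continuousB.
apply: continuous_subspaceT => y.
apply: (@continuous_comp _ _ _ (fun y : vec => lam * y 0 0) (fun t => eta * expR t)).
  exact: (cvgM (cvg_cst lam) (@coord_continuous _ _ _ 0 0 y)).
exact: (cvgM (cvg_cst eta) (@continuous_expR _ _)).
Qed.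

Lemma solution_le {b : R} : (forall x, U x -> `|x| <= b) ->
  forall x, closure U x -> u x <= v x.
Proof.
have [[_ v_C2] _] := v_sol.
move=> Ub x0 clx0; rewrite leNgt; apply/negP => vu_lt.
set M0 := u x0 - v x0; have M0_gt0 : 0 < M0 by rewrite subr_gt0.
have M02_gt0 : 0 < M0 / 2 by rewrite divr_gt0.
set K := [set y | closure U y /\ M0 / 2 <= u y - v y].
have cU : compact (closure U) := bounded_closure_compact Ub.
have KU : K `<=` U := superlevel_sub _ M02_gt0.
have [B dvB] : exists B, forall i y, K y -> `|'D_(evec R i) v y| <= B.
  apply: compact_continuous_family_bounded (superlevel_compact _ cU) _ => i.
  apply: continuous_in_subspaceT => y; rewrite inE => Ky.
  exact: differentiable_continuous ((v_C2 (evec R i)).1 y (KU y Ky)).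
have [C dHC] : exists C, forall p, `|p| <= B + 1 -> `|'D_(evec R 0) H p| <= C.
  apply: compact_continuous_bounded (compact_norm_le _ (B + 1)) _.
  by apply: continuous_subspaceT => p; exact: H_C1.2 (evec R 0) p I.
set lam := `|C| / eps + 1.
have lam_gt0 : 0 < lam by rewrite ltr_wpDl // divr_ge0 // ltW.
have C_lt : C < eps * lam.
  by rewrite mulrDr mulr1 mulrC divfK ?gt_eqF // (le_lt_trans (ler_norm C)) // ltrDl.
set E0 := expR (lam * b).
have phi_le y : closure U y -> expR (lam * y 0 0) <= E0.
  move=> /(closure_norm_le Ub) /= yb; rewrite ler_expR ler_pM2l //.
  apply: le_trans (ler_norm _) (le_trans _ yb).
  exact: coord_le_norm.
have [eta eta_gt0 [eta_E0 eta_lam]] := @small_weight_exists _ _ E0 _ M02_gt0 (expR_gt0 _) lam_gt0.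
pose f y := u y - v y + eta * expR (lam * y 0 0).
have [x clx fmax] := EVT_max_rV (ex_intro _ x0 clx0) cU (perturbed_continuous lam eta).
rewrite inE in clx.
have Kx : K x.
  split => //.
  have w_le : eta * expR (lam * x 0 0) <= eta * E0 by rewrite ler_pM2l // phi_le.
  have w0_gt0 : 0 < eta * expR (lam * x0 0 0) by rewrite mulr_gt0 ?expR_gt0.
  have := fmax x0 (mem_set clx0); rewrite /f -/M0; lra.
have s_le1 : eta * lam * expR (lam * x 0 0) <= 1.
  apply: le_trans eta_lam; rewrite ler_pM2l ?mulr_gt0 //; exact: phi_le.
have fmax_U y : U y -> f y <= f x by move=> Uy; apply/fmax/mem_set/subset_closure.
have := perturbed_max_bound _ _ _ _ _ (KU _ Kx) eta_gt0 lam_gt0 s_le1 fmax_U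
  (fun i => dvB i x Kx) dHC.
by rewrite leNgt C_lt.
Qed.

End Comparison.

Theorem theorem6 (R : realType) (m : nat) (U : set 'rV[R]_(1 + m))
    (H : 'rV[R]_(1 + m) -> R) (gamma delta eps : R)
    (u v : 'rV[R]_(1 + m) -> R) :
  smooth_bounded_domain U ->
  smooth H -> H 0 < 0 -> superlinear H ->
  0 < gamma -> 0 < delta ->
  (forall p, delta <= dotv (grad H p) p - gamma * H p) ->
  0 < eps ->
  classical_solution U H eps u ->
  classical_solution U H eps v ->
  forall x, closure U x -> u x = v x.
Proof.
move=> [openU [_ [[b Ub] _]]] H_smooth _ _ _ _ _ eps_gt0 u_sol v_sol x clx.
have U_norm_le y : U y -> `|y| <= b by move=> Uy; exact: le_trans (norm_le_enorm y) (Ub y Uy).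
have H_C1 := H_smooth 1%N.
have u_le_v := solution_le openU H_C1 eps_gt0 u_sol v_sol U_norm_le.
have v_le_u := solution_le openU H_C1 eps_gt0 v_sol u_sol U_norm_le.
by apply/eqP; rewrite eq_le u_le_v ?v_le_u.
Qed.
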